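(* The counter graph $\mathbb{C}(\lambda^* )$ has size $|\mathbb{C}(\lambda^* )|=|V|\cdot2^{|\Pi|}\cdot(\mathrm{mR}(\lambda^* )+2)^{|\Pi|}$, which is exponential in the size of the game $\mathcal{G}$ (i.e., bounded by $2^{p}$ for some polynomial $p$ in the size of $\mathcal{G}$).
   Context: Let $\mathcal{G}$ be a quantitative reachability game on an arena $G=(\Pi,V,(V_i)_{i\in\Pi},E)$ (finite player set $\Pi$, finite vertex set $V$ with $|V|\ge2$, $|\Pi|\le|V|$, partition $(V_i)$, every vertex has a successor) with targets $F_i\subseteq V$ and costs $\mathrm{Cost}_i(\rho)=$ least $k$ with $\rho_k\in F_i$ (or $+\infty$); $v_0\in V$. Extended game: arena $X$ with vertices $V^X=V\times2^\Pi$, edges $((v,I),(v',I'))\in E^X$ iff $(v,v')\in E$ and $I'=I\cup\{i:v'\in F_i\}$, $(v,I)\in V^X_i$ iff $v\in V_i$, targets $F^X_i=\{(v,I):i\in I\}$ with corresponding costs; $x_0=(v_0,\{i:v_0\in F_i\})$; $I(u)$ is the second component. $\mathcal{I}$ is the set of $I$ with some $(v,I)$ reachable from $x_0$, $N=|\mathcal{I}|$, $J_1<\dots<J_N$ a fixed total order of $\mathcal{I}$ extending $I<I'$ iff $I\ne I'$ and some $(v',I')$ is reachable from some $(v,I)$. $V^{\ge J_n}=\{(v,J_m):v\in V,m\ge n\}$. Labelings: for $\lambda:V^X\to\mathbb{N}\cup\{+\infty\}$, a play $\rho$ of $X$ is $\lambda$-consistent if $\mathrm{Cost}_i(\rho_{\ge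 n})\le\lambda(\rho_n)$ whenever $\rho_n\in V^X_i$. $\lambda^0(u)=0$ if $u\in V^X_i$ and $i\in I(u)$, else $+\infty$. The update of $\lambda^k$ w.r.t. $V^{\ge J_n}$ keeps values outside $V^{\ge J_n}$ and for $u\in V^{\ge J_n}\cap V^X_i$ sets $\lambda^{k+1}(u)=0$ if $i\in I(u)$, otherwise $1+\min_{(u,u')\in E^X}\sup\{\mathrm{Cost}_i(\rho):\rho$ a $\lambda^k$-consistent play from $u'\}$ ($1+(+\infty)=+\infty$). The sequence is generated by $n_0=N$, $\lambda^{k+1}=$ update of $\lambda^k$ w.r.t. $V^{\ge J_{n_k}}$, $n_{k+1}=n_k-1$ if $\lambda^{k+1}=\lambda^k$ and $n_k>1$, else $n_{k+1}=n_k$; it eventually becomes constant, equal to $\lambda^*$. $\mathrm{mR}(\lambda)$ is the maximum of the finite values of $\lambda$ ($0$ if none). Counter graph $\mathbb{C}(\lambda)$: with $K=\mathrm{mR}(\lambda)$, $\mathcal{K}=\{0,\dots,K\}\cup\{+\infty\}$, its vertex set is $V^X\times\mathcal{K}^\Pi$, with an edge from $(u,(c_i)_i)$ to $(u',(c'_i)_i)$ iff $(u,u')\in E^X$ and for every $i$: either $i\in I(u')$ and $c'_i=0$; or $i\notin I(u')$, $u'\notin V^X_i$, $c_i>1$, $c'_i=c_i-1$; or $i\notin I(u')$, $u'\in V^X_i$, $c_i>1$, $c'_i=\min(c_i-1,\lambda(u'))$. Its size is its number of vertices. *)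

From HB Require Import structures.
From mathcomp Require Import all_boot.
From Stdlib Require Import ClassicalEpsilon.
Set Implicit Arguments. Unset Strict Implicit. Unset Printing Implicit Defensive.

(* Extended naturals N u {+oo}: [Some n] is n, [None] is +oo. *)
Definition enat := option nat.
Definition ele (x y : enat) : bool :=
  match x, y with
  | _, None => true
  | None, Some _ => false
  | Some a, Some b => a <= b
  end.
Definition eadd1 (x : enat) : enat := omap S x.
Definition esub1 (x : enat) : enat := omap predn x.
Definition egt1 (x : enat) : bool := if x is Some n then 1 < n else true.
Definition emin (x y : enat) : enat := if ele x y then x else y.

Definition is_lub (S : enat -> Prop) (s : enat) :=
  (forall x, S x -> ele x s) /\ (forall b, (forall x, S x -> ele x b) -> ele s b).
Definition is_glb (S : enat -> Prop) (s : enat) :=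
  (forall x, S x -> ele s x) /\ (forall b, (forall x, S x -> ele b x) -> ele b s).
Definition esup (S : enat -> Prop) : enat := epsilon (inhabits None) (is_lub S).
Definition einf (S : enat -> Prop) : enat := epsilon (inhabits None) (is_glb S).

Section Game.
Variables (Pi V : finType) (own : V -> Pi) (E : rel V) (F : Pi -> {set V}) (v0 : V).

Local Notation VX := (V * {set Pi})%type.

Definition targets_of (v : V) : {set Pi} := [set i | v \in F i].

Definition EX : rel VX := fun u u' => E u.1 u'.1 && (u'.2 == u.2 :|: targets_of u'.1).
Definition ownX (u : VX) : Pi := own u.1.
Definition x0 : VX := (v0, targets_of v0).

Definition is_play (r : nat -> VX) : Prop := forall n, EX (r n) (r n.+1).

Definition costX (i : Pi) (r : nat -> VX) : enat :=
  epsilon (inhabits None) (fun c => match c with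
    | Some k => i \in (r k).2 /\ forall j, j < k -> i \notin (r j).2
    | None => forall k, i \notin (r k).2
    end).

Definition suffix (r : nat -> VX) (n : nat) : nat -> VX := fun k => r (n + k).

Definition consistent (lam : VX -> enat) (r : nat -> VX) : Prop :=
  forall n, ele (costX (ownX (r n)) (suffix r n)) (lam (r n)).

Definition lam0 (u : VX) : enat := if ownX u \in u.2 then Some 0 else None.

Definition calI : {set {set Pi}} := [set I | [exists v, connect EX x0 (v, I)]].

Definition reach_lt (I I' : {set Pi}) : bool :=
  (I != I') && [exists v, [exists v', connect EX (v, I) (v', I')]].

Definition valid_order (Js : seq {set Pi}) : Prop :=
  [/\ uniq Js, (forall I, (I \in Js) = (I \in calI)) &
      (forall m n, m < size Js -> n < size Js ->
         reach_lt (nth set0 Js m) (nth set0 Js n) -> m < n)].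

Variable Js : seq {set Pi}.

(* u \in V^{>= J_n}  (n is 1-based as in the paper) *)
Definition inGe (n : nat) (u : VX) : bool := (u.2 \in Js) && (n <= (index u.2 Js).+1).

Definition upd (lam : VX -> enat) (n : nat) (u : VX) : enat :=
  if inGe n u then
    if ownX u \in u.2 then Some 0
    else eadd1 (einf (fun c => exists u', EX u u' /\
           c = esup (fun d => exists r, [/\ is_play r, r 0 = u', consistent lam r &
                                           d = costX (ownX u) r])))
  else lam u.

Fixpoint state (k : nat) : (VX -> enat) * nat :=
  match k with
  | 0 => (lam0, size Js)
  | k'.+1 =>
      let (lam, n) := state k' in
      let lam' := upd lam n in
      (lam', if [forall u, lam' u == lam u] && (1 < n) then n.-1 else n)
  end.

Definition lam_k (k : nat) : VX -> enat := (state k).1.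

Definition sizeG : nat :=
  #|V| + #|Pi| + #|[set e : V * V | E e.1 e.2]| + \sum_(i : Pi) #|F i|.

End Game.

Section Counter.
Variables (Pi V : finType) (own : V -> Pi) (E : rel V) (F : Pi -> {set V}).
Local Notation VX := (V * {set Pi})%type.

Definition mR (lam : VX -> enat) : nat :=
  \max_(u : VX) (if lam u is Some n then n else 0).

Definition cval (K : nat) (c : option 'I_K) : enat := omap (@nat_of_ord K) c.

(* vertices of the counter graph C(lam): V^X x ({0..K} u {+oo})^Pi, K = mR lam *)
Definition CVert (lam : VX -> enat) := (VX * {ffun Pi -> option 'I_(mR lam).+1})%type.

Definition counter_edge (lam : VX -> enat) (x y : CVert lam) : Prop :=
  EX E F x.1 y.1 /\
  forall i : Pi,
    let c := cval (x.2 i) in let c' := cval (y.2 i) in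
    [\/ i \in y.1.2 /\ c' = Some 0,
        [/\ i \notin y.1.2, ownX own y.1 != i, egt1 c & c' = esub1 c]
      | [/\ i \notin y.1.2, ownX own y.1 == i, egt1 c & c' = emin (esub1 c) (lam y.1)]].

Definition csize (lam : VX -> enat) : nat := #|{: CVert lam}|.
End Counter.

(* The size formula is a cardinality count; the content is a bound on the
   largest finite label of λ^*. A finite label 1 + c at a vertex u of X is the
   cost c of a worst-case λ-consistent play from a successor of u. Along such
   a play the set I of reached targets must grow at least every |V| + 2W
   steps, W bounding the labels at vertices whose set contains the current
   one: otherwise a vertex repeats in a stretch where no consistency obligation
   is pending, and running that cycle once more gives a longer consistent
   play. So c <= |Π|(|V| + 2W). Labels only decrease along the sequence (λ^k),
   so the potential (|Π| - |I|)(|V| + 1) + #{v | λ^k(v, I) finite} never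
   decreases, grows when a new finite label appears at some (v, I), and is
   smaller for larger I. Induction on it bounds every finite label by
   (1 + |Π||V|)(2|Π| + 2)^potential, and the potential is at most
   (|Π| + 1)(|V| + 1). *)
From Pilot Require Import Defs.
From HB Require Import structures.
From mathcomp Require Import all_boot zify.
From Stdlib Require Import ClassicalEpsilon.
Set Implicit Arguments. Unset Strict Implicit. Unset Printing Implicit Defensive.

Lemma ex_minn_prop (P : nat -> Prop) n : P n -> exists m, P m /\ forall k, P k -> m <= k.
Proof.
move=> Pn.
pose p k : bool := if excluded_middle_informative (P k) then true else false.
have pP k : reflect (P k) (p k).
  by rewrite /p; case: excluded_middle_informative => H; constructor.
have [|m /pP Pm minm] := ex_minnP (_ : exists k, p k); first by exists n; apply/pP.
by exists m; split=> // k /pP; apply: minm.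
Qed.

Lemma ele_refl x : ele x x. Proof. by case: x => /=. Qed.

Lemma ele_None x : ele x None. Proof. by case: x. Qed.

Lemma ele_trans x y z : ele x y -> ele y z -> ele x z.
Proof. by case: x; case: y; case: z => //= a b c; apply: leq_trans. Qed.

Lemma eadd1_mono x y : ele x y -> ele (eadd1 x) (eadd1 y).
Proof. by case: x; case: y. Qed.

Lemma enat_lub_exists S : exists s, is_lub S s.
Proof.
have [[n ubn]|unbounded] := classic (exists n, forall x, S x -> ele x (Some n)).
  have [m [ubm minm]] :=
    ex_minn_prop (P := fun n => forall x, S x -> ele x (Some n)) ubn.
  by exists (Some m); split=> // [[b|]] ubb //=; apply: minm.
exists None; split=> [x _|[b|] ubb //]; first exact: ele_None.
by case: unbounded; exists b.
Qed.

Lemma enat_glb_exists S : exists s, is_glb S s.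
Proof.
have [[n Sn]|noSome] := classic (exists n, S (Some n)).
  have [m [Sm minm]] := ex_minn_prop (P := fun n => S (Some n)) Sn.
  by exists (Some m); split=> [[x|] Sx //=|b lbb]; [apply: minm | apply: lbb].
exists None; split=> [[x|] Sx //=|b _]; last exact: ele_None.
by case: noSome; exists x.
Qed.

Lemma esupP S : is_lub S (esup S).
Proof. exact: epsilon_spec (enat_lub_exists S). Qed.

Lemma einfP S : is_glb S (einf S).
Proof. exact: epsilon_spec (enat_glb_exists S). Qed.

Lemma esup_attained S m : esup S = Some m.+1 -> S (Some m.+1).
Proof.
move=> supS; have [ub lub] := esupP S; rewrite supS in ub lub.
apply: NNPP => notS.
suff : ele (Some m.+1) (Some m) by rewrite /= ltnn.
apply: lub => [[x|] Sx] //=; last by have := ub _ Sx.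
by move: (ub _ Sx); rewrite /= leq_eqVlt => /orP[/eqP xm|//]; subst x.
Qed.

Lemma einf_attained S m : einf S = Some m -> S (Some m).
Proof.
move=> infS; have [lb glb] := einfP S; rewrite infS in lb glb.
apply: NNPP => notS.
suff : ele (Some m.+1) (Some m) by rewrite /= ltnn.
apply: glb => [[x|] Sx] //=.
by move: (lb _ Sx); rewrite /= leq_eqVlt => /orP[/eqP xm|//]; subst x.
Qed.

Lemma esup_mono (S S' : enat -> Prop) : (forall x, S x -> S' x) -> ele (esup S) (esup S').
Proof.
move=> SS'; have [ub' _] := esupP S'; have [_ lub] := esupP S.
by apply: lub => x Sx; apply/ub'/SS'.
Qed.

Lemma einf_mono (S S' : enat -> Prop) :
  (forall x', S' x' -> exists x, S x /\ ele x x') -> ele (einf S) (einf S').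
Proof.
move=> SS'; have [_ glb'] := einfP S'; have [lb _] := einfP S.
apply: glb' => x' /SS' [x [Sx lexx']].
exact: ele_trans (lb _ Sx) lexx'.
Qed.

Section Plays.
Variables (Pi V : finType) (own : V -> Pi) (E : rel V) (F : Pi -> {set V}).
Local Notation VX := (V * {set Pi})%type.
Implicit Types (r : nat -> VX) (i : Pi).

Lemma costX_spec i r :
  match costX i r with
  | Some k => i \in (r k).2 /\ forall j, j < k -> i \notin (r j).2
  | None => forall k, i \notin (r k).2
  end.
Proof.
rewrite /costX; set P := fun c : enat => _.
suff : exists c, P c by move/(epsilon_spec (inhabits None)).
have [[k ik]|never] := classic (exists k, i \in (r k).2).
  have [m [im minm]] := ex_minn_prop (P := fun k => i \in (r k).2) ik.
  exists (Some m); split=> // j ltjm; apply/negP => /minm.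
  by rewrite leqNgt ltjm.
by exists None => k; apply/negP => ik; apply: never; exists k.
Qed.

Lemma costX_Some i r k :
  i \in (r k).2 -> (forall j, j < k -> i \notin (r j).2) -> costX i r = Some k.
Proof.
move=> ik before_k; have := costX_spec i r; case: (costX i r) => [c [ic before_c]|never].
  congr Some; case: (ltngtP c k) => [/before_k|/before_c|//].
    by rewrite ic.
  by rewrite ik.
by have := never k; rewrite ik.
Qed.

Lemma costX_le i r k : i \in (r k).2 -> exists2 c, costX i r = Some c & c <= k.
Proof.
move=> ik; have := costX_spec i r; case: (costX i r) => [c [_ before_c]|never].
  by exists c => //; rewrite leqNgt; apply/negP => /before_c; rewrite ik.
by have := never k; rewrite ik.
Qed.

Lemma costX_agree i r r' c :
  costX i r = Some c -> (forall t, t <= c -> r' t = r t) -> costX i r' = Some c.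
Proof.
move=> costc r'r; have := costX_spec i r; rewrite costc => -[ic before_c].
apply: costX_Some => [|j ltjc]; first by rewrite r'r.
by rewrite r'r ?(ltnW ltjc) //; apply: before_c.
Qed.

Lemma costX_ext i r r' : r' =1 r -> costX i r' = costX i r.
Proof.
move=> r'r; have := costX_spec i r; case costc: (costX i r) => [c|] never.
  by apply: (costX_agree costc) => t _.
have := costX_spec i r'; case: (costX i r') => [c [ic _]|//].
by have := never c; rewrite -r'r ic.
Qed.

Lemma play_mono r m n : is_play E F r -> m <= n -> (r m).2 \subset (r n).2.
Proof.
move=> play_r /subnK <-; elim: (n - m) => [|k IH] //=.
apply: subset_trans IH _; have /andP[_ /eqP ->] := play_r (k + m).
exact: subsetUl.
Qed.

Lemma play_mem r m n i : is_play E F r -> m <= n -> i \in (r m).2 -> i \in (r n).2.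
Proof. by move=> play_r lemn; apply/subsetP/play_mono. Qed.

End Plays.

Section Pumping.
Variables (Pi V : finType) (own : V -> Pi) (E : rel V) (F : Pi -> {set V}).
Local Notation VX := (V * {set Pi})%type.
Implicit Types (lam : VX -> enat) (r : nat -> VX).

Definition pending lam r p :=
  exists n, [/\ n <= p, lam (r n) <> None & ownX own (r n) \notin (r p).2].

Definition pump r a b : nat -> VX := fun m => if m < b then r m else r (m - (b - a)).

Lemma pump_play r a b : is_play E F r -> a < b -> r a = r b -> is_play E F (pump r a b).
Proof.
move=> play_r ltab rab m; rewrite /pump.
case: (ltngtP m.+1 b) => [ltm1b|ltbm1|m1b].
- exact: play_r.
- have -> : m.+1 - (b - a) = (m - (b - a)).+1 by lia.
  exact: play_r.
- have -> : m.+1 - (b - a) = a by lia.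
  by rewrite rab -m1b; apply: play_r.
Qed.

Lemma pump0 r a b : a < b -> pump r a b 0 = r 0.
Proof. by rewrite /pump => /(leq_ltn_trans (leq0n a)) ->. Qed.

Lemma pump_costX r a b i d : costX i r = Some d -> a < b -> b < d ->
  costX i (pump r a b) = Some (d + (b - a)).
Proof.
move=> costd ltab ltbd; have := costX_spec i r; rewrite costd => -[id before_d].
apply: costX_Some; rewrite /pump.
  by rewrite ltnNge (leq_trans (ltnW ltbd) (leq_addr _ _)) addnK.
by move=> j ltj; case: ifP => ltjb; apply: before_d; lia.
Qed.

Lemma pump_consistent lam r a b :
  is_play E F r -> consistent own lam r -> a < b -> r a = r b ->
  (forall p, a <= p -> p < b -> ~ pending lam r p) -> consistent own lam (pump r a b).
Proof.
move=> play_r cons_r ltab rab free n; rewrite /Defs.suffix.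
have [ltnb|lebn] := ltnP n b; last first.
  have pump_n t : pump r a b (n + t) = r (n - (b - a) + t).
    by rewrite /pump ltnNge (leq_trans lebn (leq_addr _ _)); congr r; lia.
  rewrite (costX_ext _ pump_n); have := pump_n 0; rewrite !addn0 => ->.
  exact: cons_r.
have pump_n : pump r a b n = r n by rewrite /pump ltnb.
move: (cons_r n); rewrite pump_n /Defs.suffix; set j := ownX own (r n).
case lam_n: (lam (r n)) => [x|] cost_n; last exact: ele_None.
have [jn|jNn] := boolP (j \in (r n).2).
  by rewrite (@costX_Some _ _ j _ 0) //= addn0 pump_n.
have [ltna|lean] := ltnP n a; last first.
  by case: (free n lean ltnb); exists n; split; rewrite ?lam_n.
have ja : j \in (r (n + (a - n))).2.
  apply: NNPP => jNa; apply: (free a (leqnn a) ltab); exists n.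
  by split; [apply: ltnW | rewrite lam_n | rewrite -(subnKC (ltnW ltna)); apply/negP].
have [c costc lec] := @costX_le _ _ j (fun k => r (n + k)) _ ja.
rewrite costc in cost_n; rewrite (costX_agree costc) // => t letc.
by rewrite /pump ifT //; lia.
Qed.

End Pumping.

Section CostBound.
Variables (Pi V : finType) (own : V -> Pi) (E : rel V) (F : Pi -> {set V}).
Local Notation VX := (V * {set Pi})%type.
Variables (lam : VX -> enat) (r : nat -> VX) (W : nat).
Hypotheses (play_r : is_play E F r) (cons_r : consistent own lam r)
  (lam_r_le : forall m y, lam (r m) = Some y -> y <= W).

Lemma pumpable_cycle p : (r p).2 = (r (p + (#|V| + 2 * W))).2 ->
  exists a b, [/\ p <= a, a < b, b <= p + (#|V| + 2 * W), r a = r b &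
                  forall q, a <= q -> q < b -> ~ pending own lam r q].
Proof.
set L := #|V| + 2 * W => flat.
have flatE x : p <= x -> x <= p + L -> (r x).2 = (r p).2.
  move=> lepx lexL; apply/eqP; rewrite eqEsubset (play_mono play_r lepx) andbT flat.
  exact: play_mono.
set s := p + W.
(* An obligation opened before p is met within W steps, hence before s; one
   opened later is met by p + L, and the target set is constant on [p, p + L]. *)
have window_free x : s <= x -> x <= s + #|V| -> ~ pending own lam r x.
  move=> lesx lexs [n [lenx lam_n notmet]].
  move: (cons_r n); rewrite /Defs.suffix; case lam_nE: (lam (r n)) => [l|//].
  have := costX_spec (ownX own (r n)) (fun k => r (n + k)).
  case: (costX _ _) => [c [met _]|//] /= lecl.
  have leW := lam_r_le lam_nE.
  have ltx : x < n + c.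
    by rewrite ltnNge; apply/negP => /(play_mem play_r)/(_ met); apply/negP.
  have [ltnp|lepn] := ltnP n p; first by lia.
  move/negP: notmet; apply; rewrite (flatE x) ?flat; try lia.
  by apply: (play_mem play_r _ met); lia.
pose f (k : 'I_#|V|.+1) := (r (s + k)).1.
have [k1 [k2 [lt12 f12]]] : exists k1 k2 : 'I_#|V|.+1, k1 < k2 /\ f k1 = f k2.
  apply: NNPP => noRepeat.
  suff /leq_card : injective f by rewrite card_ord ltnn.
  move=> k1 k2 f12; apply: val_inj.
  by case: (ltngtP k1 k2) => // lt; case: noRepeat; [exists k1, k2 | exists k2, k1].
have ltk2 := ltn_ord k2.
exists (s + k1), (s + k2); split; try lia; last by move=> q *; apply: window_free; lia.
rewrite [r (s + k1)]surjective_pairing [r (s + k2)]surjective_pairing.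
by congr pair; rewrite ?flatE //; lia.
Qed.

Lemma maximal_costX_le i d : costX i r = Some d ->
  (forall r', is_play E F r' -> r' 0 = r 0 -> consistent own lam r' ->
     ele (costX i r') (Some d)) ->
  d <= #|Pi| * (#|V| + 2 * W).
Proof.
set L := #|V| + 2 * W => costd maximal; rewrite leqNgt; apply/negP => ltd.
have [id before_d] : i \in (r d).2 /\ forall j, j < d -> i \notin (r j).2.
  by have := costX_spec i r; rewrite costd.
have grows s : s < #|Pi| -> (r (s * L)).2 \proper (r (s.+1 * L)).2.
  move=> ltsP; rewrite properEneq (play_mono play_r) ?andbT ?leq_mul2r ?leqnSn ?orbT //.
  apply/negP => /eqP flat; rewrite mulSn addnC in flat.
  have [a [b [_ ltab lebL rab free]]] := pumpable_cycle flat.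
  have ltbd : b < d.
    have : s.+1 * L <= #|Pi| * L by rewrite leq_mul2r ltsP orbT.
    by rewrite mulSn; lia.
  have := maximal _ (pump_play play_r ltab rab) (pump0 _ ltab)
    (pump_consistent play_r cons_r ltab rab free).
  by rewrite (pump_costX costd ltab ltbd) /=; lia.
have card_grows s : s <= #|Pi| -> s <= #|(r (s * L)).2|.
  elim: s => [|s IH] // ltsP.
  by have := proper_card (grows s ltsP); have := IH (ltnW ltsP); lia.
have : (r (#|Pi| * L)).2 \proper [set: Pi].
  by apply/properP; split; [apply: subsetT | exists i; rewrite ?inE ?before_d].
by move/proper_card; rewrite cardsT; have := card_grows _ (leqnn #|Pi|); lia.
Qed.

End CostBound.

Section Labelings.
Variables (Pi V : finType) (own : V -> Pi) (E : rel V) (F : Pi -> {set V}).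
Variable Js : seq {set Pi}.
Local Notation VX := (V * {set Pi})%type.
Local Notation upd := (upd own E F Js).
Local Notation lk := (lam_k own E F Js).
Local Notation nk k := (state own E F Js k).2.

Lemma upd_value_le lam n (u : VX) v W :
  inGe Js n u -> ownX own u \notin u.2 -> upd lam n u = Some v ->
  (forall (w : VX) y, u.2 \subset w.2 -> lam w = Some y -> y <= W) ->
  v <= 1 + #|Pi| * (#|V| + 2 * W).
Proof.
rewrite /Defs.upd => -> /negbTE ->; case infE: (einf _) => [e|] //= [<-] lam_le.
have [u' [uu' supE]] := einf_attained infE.
case: e supE {infE} => [//|e] supE.
have [r [play_r r0 cons_r coste]] := esup_attained (esym supE).
rewrite add1n ltnS; apply: (maximal_costX_le play_r cons_r _ (esym coste)).
- move=> m y; apply: lam_le; apply: subset_trans (play_mono play_r (leq0n m)).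
  by move: uu'; rewrite r0 => /andP[_ /eqP ->]; apply: subsetUl.
- move=> r' play_r' r'0 cons_r'; rewrite supE.
  by case: (esupP (fun d => exists r, [/\ is_play E F r, r 0 = u', consistent own lam r &
      d = costX (ownX own u) r])) => ub _; apply: ub; exists r'; rewrite r'0 r0.
Qed.

Lemma upd_mono lam lam' n (u : VX) :
  (forall w, ele (lam w) (lam' w)) -> ele (upd lam n u) (upd lam' n u).
Proof.
move=> lelam; rewrite /Defs.upd; case: ifP => _; last exact: lelam.
case: ifP => // _; apply/eadd1_mono/einf_mono => _ [u' [uu' ->]].
eexists; split; first by exists u'; split; [exact: uu' | reflexivity].
apply: esup_mono => d [r [play_r r0 cons_r ->]]; exists r; split=> // m.
exact: ele_trans (cons_r m) (lelam _).
Qed.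

Lemma upd_le_lam0 lam n (u : VX) : inGe Js n u -> ele (upd lam n u) (lam0 own u).
Proof. by rewrite /Defs.upd /lam0 => ->; case: ifP => //= _; apply: ele_None. Qed.

Lemma upd_inGe_irr lam n m (u : VX) :
  inGe Js n u -> inGe Js m u -> upd lam n u = upd lam m u.
Proof. by rewrite /Defs.upd => -> ->. Qed.

Lemma inGe_mono n m (u : VX) : n <= m -> inGe Js m u -> inGe Js n u.
Proof. by rewrite /inGe => lenm /andP[-> /(leq_trans lenm)]. Qed.

Lemma lam_kS k : lk k.+1 = upd (lk k) (nk k).
Proof. by rewrite /lam_k /=; case: (state own E F Js k). Qed.

Lemma state_n_nonincr k : nk k.+1 <= nk k.
Proof.
by rewrite /=; case: (state own E F Js k) => lam n /=; case: ifP => // _; apply: leq_pred.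
Qed.

Lemma lam_k_outside k (u : VX) : ~~ inGe Js (nk k) u -> lk k u = lam0 own u.
Proof.
elim: k => [//|k IH] notGe.
have notGe' : ~~ inGe Js (nk k) u by apply: contra notGe; apply/inGe_mono/state_n_nonincr.
by rewrite lam_kS /Defs.upd (negbTE notGe') IH.
Qed.

Lemma lam_k_nonincr k (u : VX) : ele (lk k.+1 u) (lk k u).
Proof.
elim: k u => [|k IH] u; rewrite lam_kS.
  case: (boolP (inGe Js (nk 0) u)) => [Ge|/negbTE notGe]; first exact: upd_le_lam0.
  by rewrite /Defs.upd notGe ele_refl.
case: (boolP (inGe Js (nk k.+1) u)) => [Ge|/negbTE notGe]; last first.
  by rewrite /Defs.upd notGe ele_refl.
case: (boolP (inGe Js (nk k) u)) => [Ge'|notGe'].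
  by rewrite {2}(lam_kS k) (upd_inGe_irr _ Ge Ge'); apply: upd_mono.
have -> : lk k.+1 u = lam0 own u.
  by rewrite lam_kS /Defs.upd (negbTE notGe') (lam_k_outside notGe').
exact: upd_le_lam0.
Qed.

End Labelings.

Section Potential.
Variables (Pi V : finType) (own : V -> Pi) (E : rel V) (F : Pi -> {set V}).
Variable Js : seq {set Pi}.
Local Notation VX := (V * {set Pi})%type.
Local Notation lk := (lam_k own E F Js).

Definition finite_labels k (I : {set Pi}) := [set v : V | lk k (v, I) != None].

Definition potential k (I : {set Pi}) := (#|Pi| - #|I|) * #|V|.+1 + #|finite_labels k I|.

Lemma finite_labels_subset k I : finite_labels k I \subset finite_labels k.+1 I.
Proof.
apply/subsetP => v; rewrite !inE.
by have := lam_k_nonincr own E F Js k (v, I); case: (lk k.+1 _); case: (lk k _).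
Qed.

Lemma potential_mono k I : potential k I <= potential k.+1 I.
Proof. by rewrite leq_add2l subset_leq_card ?finite_labels_subset. Qed.

Lemma potential_new_finite k (u : VX) :
  lk k u = None -> lk k.+1 u <> None -> potential k u.2 < potential k.+1 u.2.
Proof.
move=> fin_k fin_k1; rewrite ltn_add2l proper_card // properEneq finite_labels_subset andbT.
apply/negP => /eqP same.
have : u.1 \in finite_labels k.+1 u.2 by rewrite inE -surjective_pairing; apply/eqP.
by rewrite -same inE -surjective_pairing fin_k.
Qed.

Lemma potential_proper k (I J : {set Pi}) : I \proper J -> potential k J < potential k I.
Proof.
move=> ltIJ; have ltIJc := proper_card ltIJ; have leJ : #|J| <= #|Pi| := max_card J.
have : (#|Pi| - #|J|).+1 * #|V|.+1 <= (#|Pi| - #|I|) * #|V|.+1.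
  by rewrite leq_mul2r; apply/orP; right; lia.
have : #|finite_labels k J| <= #|V| := max_card _.
by rewrite /potential mulSn; lia.
Qed.

Lemma potential_le k I : potential k I <= (#|Pi| + 1) * (#|V| + 1).
Proof.
have : (#|Pi| - #|I|) * #|V|.+1 <= #|Pi| * #|V|.+1 by rewrite leq_mul2r leq_subr orbT.
have : #|finite_labels k I| <= #|V| := max_card _.
by rewrite /potential mulnDl mul1n addn1; lia.
Qed.

End Potential.

Section LabelBound.
Variables (Pi V : finType) (own : V -> Pi) (E : rel V) (F : Pi -> {set V}).
Variable Js : seq {set Pi}.
Local Notation VX := (V * {set Pi})%type.
Local Notation lk := (lam_k own E F Js).
Local Notation nk k := (state own E F Js k).2.

Definition label_offset := 1 + #|Pi| * #|V|.
Definition label_bound e := label_offset * (2 * #|Pi| + 2) ^ e.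

Lemma label_bound_mono e e' : e <= e' -> label_bound e <= label_bound e'.
Proof. by move=> le; rewrite leq_mul2l leq_pexp2l ?orbT ?addn2. Qed.

Lemma label_bound_step e W v :
  W <= label_bound e -> v <= 1 + #|Pi| * (#|V| + 2 * W) -> v <= label_bound e.+1.
Proof.
rewrite /label_bound /label_offset expnS mulnCA.
have : 0 < (2 * #|Pi| + 2) ^ e by rewrite expn_gt0 addn2.
set X := _ ^ e; set p := #|Pi|; set n := #|V|; nia.
Qed.

Lemma lam_k_value_le k (u : VX) y :
  lk k u = Some y -> y <= label_bound (potential own E F Js k u.2).
Proof.
elim: k u y => [|k IH] u y; first by rewrite /lam_k /= /lam0; case: ifP => // _ [<-].
case old: (lk k u) => [y0|] new.
  have := lam_k_nonincr own E F Js k u; rewrite new old /= => le_y_y0.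
  apply: leq_trans (label_bound_mono (potential_mono own E F Js k u.2)).
  exact: leq_trans le_y_y0 (IH _ _ old).
move: new; rewrite lam_kS.
have [Ge|notGe] := boolP (inGe Js (nk k) u); last by rewrite /Defs.upd (negbTE notGe) old.
have [owner_done|owner_open] := boolP (ownX own u \in u.2).
  by rewrite /Defs.upd Ge owner_done => -[<-].
move=> new; have grows : potential own E F Js k u.2 < potential own E F Js k.+1 u.2.
  by apply: potential_new_finite old _; rewrite lam_kS new.
apply: leq_trans (label_bound_mono grows); apply: label_bound_step (leqnn _) _.
apply: (upd_value_le Ge owner_open new) => w y' leuw lk_w.
apply: leq_trans (IH _ _ lk_w) (label_bound_mono _).
have [-> //|neq] := eqVneq u.2 w.2.
by apply/ltnW/potential_proper; rewrite properEneq neq leuw.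
Qed.

End LabelBound.

Lemma mR_le_label_bound (Pi V : finType) (own : V -> Pi) (E : rel V) (F : Pi -> {set V})
    (Js : seq {set Pi}) (lam : V * {set Pi} -> enat) k :
  lam_k own E F Js k =1 lam -> mR lam <= label_bound Pi V ((#|Pi| + 1) * (#|V| + 1)).
Proof.
move=> lamE; apply/bigmax_leqP => u _; case lam_u: (lam u) => [y|//].
rewrite -lamE in lam_u.
exact: leq_trans (lam_k_value_le lam_u) (label_bound_mono _ _ (potential_le _ _ _ _ _ _)).
Qed.

Lemma card_sets (T : finType) : #|{: {set T}}| = 2 ^ #|T|.
Proof. by rewrite -cardsT -card_powerset; apply: eq_card => A; rewrite !inE subsetT. Qed.

Lemma csizeE (Pi V : finType) (lam : V * {set Pi} -> enat) :
  csize lam = #|V| * 2 ^ #|Pi| * (mR lam + 2) ^ #|Pi|.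
Proof. by rewrite /csize /CVert !card_prod card_sets card_ffun card_option card_ord addn2. Qed.

Lemma leq_expn_base a b e : a <= b -> a ^ e <= b ^ e.
Proof. by move=> leab; elim: e => [|e IH] //; rewrite !expnS leq_mul. Qed.

Lemma counter_size_le_exp n p s M :
  n <= s -> p <= s -> 0 < s -> M <= (1 + p * n) * (2 * p + 2) ^ ((p + 1) * (n + 1)) ->
  n * 2 ^ p * (M + 2) ^ p <= 2 ^ (22 * s ^ 4).
Proof.
move=> les_n les_p s_gt0 leM.
have le_pow2 x : x <= 2 ^ x by apply/ltnW/ltn_expl.
set e := 1 + p * n + (2 * p + 2) * ((p + 1) * (n + 1)).
have leM2 : M + 2 <= 2 ^ e.+2.
  have leMe : M <= 2 ^ e.
    rewrite expnD expnM; apply: leq_trans leM (leq_mul (le_pow2 _) _).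
    exact/leq_expn_base/le_pow2.
  have : 0 < 2 ^ e by rewrite expn_gt0.
  by rewrite (expnS 2 e.+1) (expnS 2 e); lia.
apply: leq_trans (_ : 2 ^ n * 2 ^ p * (2 ^ e.+2) ^ p <= _).
  by rewrite !leq_mul ?leq_expn_base.
rewrite -expnM -!expnD leq_exp2l //.
have : e <= 1 + s * s + (2 * s + 2) * ((s + 1) * (s + 1)).
  by rewrite /e; repeat (apply: leq_add || apply: leq_mul).
by rewrite !expnS expn0; nia.
Qed.

Theorem corollary3p11 :
  exists c k : nat,
  forall (Pi V : finType) (own : V -> Pi) (E : rel V) (F : Pi -> {set V}) (v0 : V)
         (Js : seq {set Pi}) (lamstar : V * {set Pi} -> option nat),
    2 <= #|V| -> #|Pi| <= #|V| -> (forall v, exists v', E v v') ->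
    valid_order E F v0 Js ->
    (exists K, forall kk, K <= kk -> forall u, lam_k own E F Js kk u = lamstar u) ->
    csize lamstar = #|V| * 2 ^ #|Pi| * (mR lamstar + 2) ^ #|Pi| /\
    csize lamstar <= 2 ^ (c * (sizeG E F) ^ k).
Proof.
(* The label bound holds for any Js; of the arena hypotheses only 2 <= #|V|,
   which makes sizeG positive, is needed. *)
exists 22, 4 => Pi V own E F v0 Js lamstar leV2 _ _ _ [K limit].
split; rewrite csizeE //.
have lamstarE : lam_k own E F Js K =1 lamstar by apply: limit.
apply: counter_size_le_exp (mR_le_label_bound lamstarE); rewrite /sizeG; lia.
Qed.
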